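(* Let $P$ and $Q$ be posets. If the product space $\Sigma P\times \Sigma Q$ is a Fréchet space, then the Scott topology of the product poset $P\times Q$ coincides with the product topology of $\Sigma P$ and $\Sigma Q$, i.e. $\Sigma(P\times Q)=\Sigma P\times\Sigma Q$.
   Context: For a poset $P$, a subset $U\subseteq P$ is Scott open if $U$ is an upper set and for every directed $D\subseteq P$ whose supremum $\bigvee D$ exists, $\bigvee D\in U$ implies $D\cap U\neq\emptyset$. The Scott open sets form the Scott topology $\sigma(P)$, and $\Sigma P=(P,\sigma(P))$. The product poset $P\times Q$ carries the coordinatewise order. A topological space $X$ is a Fréchet space if for every subset $A\subseteq X$ and every $x$ in the closure of $A$, there is a sequence $(x_n)_{n\in\omega}$ of elements of $A$ converging to $x$. *)

Set Implicit Arguments.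

Section Defs.

(* A poset is a type with a relation [le]; the partial-order axioms are
   given as hypotheses of the theorem (see is_poset). *)
Definition is_poset {T : Type} (le : T -> T -> Prop) : Prop :=
  (forall x, le x x) /\
  (forall x y, le x y -> le y x -> x = y) /\
  (forall x y z, le x y -> le y z -> le x z).

Definition upper_set {T : Type} (le : T -> T -> Prop) (U : T -> Prop) : Prop :=
  forall x y, U x -> le x y -> U y.

Definition directed {T : Type} (le : T -> T -> Prop) (D : T -> Prop) : Prop :=
  (exists d, D d) /\
  (forall x y, D x -> D y -> exists z, D z /\ le x z /\ le y z).

Definition is_sup {T : Type} (le : T -> T -> Prop) (D : T -> Prop) (s : T) : Prop :=
  (forall d, D d -> le d s) /\
  (forall u, (forall d, D d -> le d u) -> le s u).

Definition scott_open {T : Type} (le : T -> T -> Prop) (U : T -> Prop) : Prop :=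
  upper_set le U /\
  forall (D : T -> Prop) (s : T),
    directed le D -> is_sup le D s -> U s -> exists d, D d /\ U d.

Definition prod_le {P Q : Type} (leP : P -> P -> Prop) (leQ : Q -> Q -> Prop)
  (x y : P * Q) : Prop := leP (fst x) (fst y) /\ leQ (snd x) (snd y).

Definition prod_open {P Q : Type} (openP : (P -> Prop) -> Prop)
  (openQ : (Q -> Prop) -> Prop) (U : P * Q -> Prop) : Prop :=
  forall z, U z -> exists (A : P -> Prop) (B : Q -> Prop),
    openP A /\ openQ B /\ A (fst z) /\ B (snd z) /\
    (forall a b, A a -> B b -> U (a, b)).

Definition in_closure {X : Type} (opn : (X -> Prop) -> Prop) (A : X -> Prop) (x : X) : Prop :=
  forall U, opn U -> U x -> exists a, A a /\ U a.

Definition seq_converges {X : Type} (opn : (X -> Prop) -> Prop) (s : nat -> X) (x : X) : Prop :=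
  forall U, opn U -> U x -> exists N, forall n, N <= n -> U (s n).

Definition frechet {X : Type} (opn : (X -> Prop) -> Prop) : Prop :=
  forall (A : X -> Prop) (x : X), in_closure opn A x ->
    exists s : nat -> X, (forall n, A (s n)) /\ seq_converges opn s x.

End Defs.

From Stdlib Require Import Classical Arith Lia.

Set Implicit Arguments.

(* Every box [A x B] of Scott-open sets is Scott open in [P x Q], since both
   projections are Scott continuous; this gives one inclusion.  Conversely, a Scott-open [U] of [P x Q] is sequentially open in
   [ΣP x ΣQ]: if [c n -> (a, b)] and [U (a, b)], then [U (a, snd (c n))] for
   [n >= M], and, with [t m := snd (c (M + m))], the set
   [{x | U (x, b) /\ forall m, U (x, t m)}] is Scott open in [P] and contains
   [a].  For a directed [D] with supremum in it, one [d0 ∈ D] handles [b] and,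
   because [t -> b], all but finitely many [t m]; the finitely many others are
   handled by a common upper bound in [D].  Hence [fst (c n)] eventually lies
   in that set, i.e. [U (c n)] eventually.  In a Fréchet space sequentially
   open sets are open. *)

Definition image {S T : Type} (f : S -> T) (D : S -> Prop) (t : T) : Prop :=
  exists d, D d /\ f d = t.

Definition monotone {S T : Type} (leS : S -> S -> Prop) (leT : T -> T -> Prop)
  (f : S -> T) : Prop :=
  forall x y, leS x y -> leT (f x) (f y).

Definition scott_continuous {S T : Type} (leS : S -> S -> Prop)
  (leT : T -> T -> Prop) (f : S -> T) : Prop :=
  monotone leS leT f /\
  forall D s, directed leS D -> is_sup leS D s -> is_sup leT (image f D) (f s).

Definition seq_open {X : Type} (opn : (X -> Prop) -> Prop) (U : X -> Prop) : Prop :=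
  forall s x, U x -> seq_converges opn s x ->
    exists N, forall n, N <= n -> U (s n).

Section ScottOpen.

Variables (T : Type) (le : T -> T -> Prop).

Lemma scott_open_True : scott_open le (fun _ => True).
Proof.
  split.
  - intros x y _ _; exact I.
  - intros D s [[d Hd] _] _ _. exists d; auto.
Qed.

Lemma scott_open_inter (U V : T -> Prop) :
  scott_open le U -> scott_open le V -> scott_open le (fun x => U x /\ V x).
Proof.
  intros [upU hitU] [upV hitV]. split.
  - intros x y [HUx HVx] Hxy. split; [exact (upU x y HUx Hxy) | exact (upV x y HVx Hxy)].
  - intros D s HD Hs [HUs HVs].
    destruct (hitU D s HD Hs HUs) as [d1 [Hd1 HUd1]].
    destruct (hitV D s HD Hs HVs) as [d2 [Hd2 HVd2]].
    destruct (proj2 HD d1 d2 Hd1 Hd2) as [e [He [H1e H2e]]].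
    exists e. split; [exact He | split; [exact (upU d1 e HUd1 H1e) | exact (upV d2 e HVd2 H2e)]].
Qed.

Lemma scott_open_of_local (U : T -> Prop) :
  (forall x, U x -> exists V, scott_open le V /\ V x /\ forall y, V y -> U y) ->
  scott_open le U.
Proof.
  intros Hloc. split.
  - intros x y HUx Hxy.
    destruct (Hloc x HUx) as [V [[upV _] [HVx HVU]]].
    exact (HVU y (upV x y HVx Hxy)).
  - intros D s HD Hs HUs.
    destruct (Hloc s HUs) as [V [[_ hitV] [HVs HVU]]].
    destruct (hitV D s HD Hs HVs) as [d [Hd HVd]].
    exists d. split; [exact Hd | exact (HVU d HVd)].
Qed.

Lemma directed_bound_lt (D : T -> Prop) (R : nat -> T -> Prop) (k : nat) :
  directed le D -> (forall m, upper_set le (R m)) ->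
  (forall m, m < k -> exists x, D x /\ R m x) ->
  exists d, D d /\ forall m, m < k -> R m d.
Proof.
  intros HD upR. induction k as [|k IH]; intros Hex.
  - destruct (proj1 HD) as [d Hd]. exists d. split; [exact Hd | intros m Hm; lia].
  - destruct IH as [d [Hd HRd]]; [intros m Hm; apply Hex; lia |].
    destruct (Hex k ltac:(lia)) as [x [Hx HRx]].
    destruct (proj2 HD d x Hd Hx) as [e [He [Hde Hxe]]].
    exists e. split; [exact He |].
    intros m Hm. destruct (Nat.eq_dec m k) as [-> | Hne].
    + exact (upR k x e HRx Hxe).
    + exact (upR m d e (HRd m ltac:(lia)) Hde).
Qed.

End ScottOpen.

Lemma directed_image {S T : Type} (leS : S -> S -> Prop) (leT : T -> T -> Prop)
  (f : S -> T) (D : S -> Prop) :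
  monotone leS leT f -> directed leS D -> directed leT (image f D).
Proof.
  intros Hf [[d Hd] Hdir]. split.
  - exists (f d), d. auto.
  - intros u v [x [Hx <-]] [y [Hy <-]].
    destruct (Hdir x y Hx Hy) as [z [Hz [Hxz Hyz]]].
    exists (f z). split; [exists z; auto | split; apply Hf; assumption].
Qed.

Lemma scott_open_preimage {S T : Type} (leS : S -> S -> Prop) (leT : T -> T -> Prop)
  (f : S -> T) (U : T -> Prop) :
  scott_continuous leS leT f -> scott_open leT U -> scott_open leS (fun x => U (f x)).
Proof.
  intros [Hmono Hsup] [upU hitU]. split.
  - intros x y HUx Hxy. exact (upU (f x) (f y) HUx (Hmono x y Hxy)).
  - intros D s HD Hs HUs.
    destruct (hitU (image f D) (f s) (directed_image Hmono HD) (Hsup D s HD Hs) HUs)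
      as [t [[d [Hd <-]] HUt]].
    exists d. auto.
Qed.

Section ScottProduct.

Variables (P Q : Type) (leP : P -> P -> Prop) (leQ : Q -> Q -> Prop).

Lemma scott_continuous_fst : scott_continuous (prod_le leP leQ) leP fst.
Proof.
  split.
  - intros x y [Hxy _]. exact Hxy.
  - intros D s _ [Hub Hleast]. split.
    + intros p [d [Hd <-]]. exact (proj1 (Hub d Hd)).
    + intros u Hu.
      refine (proj1 (Hleast (u, snd s) _)).
      intros d Hd. split; [apply Hu; exists d; auto | exact (proj2 (Hub d Hd))].
Qed.

Lemma scott_continuous_snd : scott_continuous (prod_le leP leQ) leQ snd.
Proof.
  split.
  - intros x y [_ Hxy]. exact Hxy.
  - intros D s _ [Hub Hleast]. split.
    + intros q [d [Hd <-]]. exact (proj2 (Hub d Hd)).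
    + intros u Hu.
      refine (proj2 (Hleast (fst s, u) _)).
      intros d Hd. split; [exact (proj1 (Hub d Hd)) | apply Hu; exists d; auto].
Qed.

Lemma scott_open_box (A : P -> Prop) (B : Q -> Prop) :
  scott_open leP A -> scott_open leQ B ->
  scott_open (prod_le leP leQ) (fun z => A (fst z) /\ B (snd z)).
Proof.
  intros HA HB. apply scott_open_inter.
  - exact (scott_open_preimage scott_continuous_fst HA).
  - exact (scott_open_preimage scott_continuous_snd HB).
Qed.

Lemma scott_open_of_prod_open (U : P * Q -> Prop) :
  prod_open (scott_open leP) (scott_open leQ) U -> scott_open (prod_le leP leQ) U.
Proof.
  intros HU. apply scott_open_of_local. intros z Hz.
  destruct (HU z Hz) as [A [B [HA [HB [HAz [HBz HAB]]]]]].
  exists (fun w => A (fst w) /\ B (snd w)).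
  split; [exact (scott_open_box HA HB) | split; [auto |]].
  intros [x y] [Hx Hy]. exact (HAB x y Hx Hy).
Qed.

Hypotheses (reflP : forall x, leP x x) (reflQ : forall y, leQ y y).

Lemma scott_continuous_pair_l (q : Q) :
  scott_continuous leP (prod_le leP leQ) (fun x => (x, q)).
Proof.
  split.
  - intros x y Hxy. split; [exact Hxy | apply reflQ].
  - intros D s [[d0 Hd0] _] [Hub Hleast]. split.
    + intros z [d [Hd <-]]. split; [exact (Hub d Hd) | apply reflQ].
    + intros u Hu. split.
      * apply Hleast. intros d Hd. exact (proj1 (Hu (d, q) (ex_intro _ d (conj Hd eq_refl)))).
      * exact (proj2 (Hu (d0, q) (ex_intro _ d0 (conj Hd0 eq_refl)))).
Qed.

Lemma scott_continuous_pair_r (p : P) :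
  scott_continuous leQ (prod_le leP leQ) (fun y => (p, y)).
Proof.
  split.
  - intros x y Hxy. split; [apply reflP | exact Hxy].
  - intros D s [[d0 Hd0] _] [Hub Hleast]. split.
    + intros z [d [Hd <-]]. split; [apply reflP | exact (Hub d Hd)].
    + intros u Hu. split.
      * exact (proj1 (Hu (p, d0) (ex_intro _ d0 (conj Hd0 eq_refl)))).
      * apply Hleast. intros d Hd. exact (proj2 (Hu (p, d) (ex_intro _ d (conj Hd eq_refl)))).
Qed.

Lemma scott_open_slice_l (U : P * Q -> Prop) (q : Q) :
  scott_open (prod_le leP leQ) U -> scott_open leP (fun x => U (x, q)).
Proof. exact (scott_open_preimage (scott_continuous_pair_l q)). Qed.

Lemma scott_open_slice_r (U : P * Q -> Prop) (p : P) :
  scott_open (prod_le leP leQ) U -> scott_open leQ (fun y => U (p, y)).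
Proof. exact (scott_open_preimage (scott_continuous_pair_r p)). Qed.

Lemma scott_open_slice_along_seq (U : P * Q -> Prop) (t : nat -> Q) (b : Q) :
  scott_open (prod_le leP leQ) U -> seq_converges (scott_open leQ) t b ->
  scott_open leP (fun x => U (x, b) /\ forall m, U (x, t m)).
Proof.
  intros HU Ht. split.
  - intros x y [Hxb Hxt] Hxy. split.
    + exact (proj1 (scott_open_slice_l b HU) x y Hxb Hxy).
    + intros m. exact (proj1 (scott_open_slice_l (t m) HU) x y (Hxt m) Hxy).
  - intros D s HD Hs [Hsb Hst].
    destruct (proj2 (scott_open_slice_l b HU) D s HD Hs Hsb) as [d0 [Hd0 Hd0b]].
    destruct (Ht _ (scott_open_slice_r d0 HU) Hd0b) as [N HN].
    destruct (directed_bound_lt (fun m x => U (x, t m)) (k := N) HD)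
      as [d [Hd Hdt]].
    { intros m. exact (proj1 (scott_open_slice_l (t m) HU)). }
    { intros m _. exact (proj2 (scott_open_slice_l (t m) HU) D s HD Hs (Hst m)). }
    destruct (proj2 HD d0 d Hd0 Hd) as [e [He [Hd0e Hde]]].
    exists e. split; [exact He | split].
    + exact (proj1 (scott_open_slice_l b HU) d0 e Hd0b Hd0e).
    + intros m. destruct (le_lt_dec N m) as [HNm | HmN].
      * exact (proj1 (scott_open_slice_l (t m) HU) d0 e (HN m HNm) Hd0e).
      * exact (proj1 (scott_open_slice_l (t m) HU) d e (Hdt m HmN) Hde).
Qed.

End ScottProduct.

Lemma seq_converges_shift {X : Type} (opn : (X -> Prop) -> Prop) (s : nat -> X)
  (x : X) (k : nat) :
  seq_converges opn s x -> seq_converges opn (fun n => s (k + n)) x.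
Proof.
  intros Hs V HV HVx. destruct (Hs V HV HVx) as [N HN].
  exists N. intros n Hn. apply HN. lia.
Qed.

Section ProductTopology.

Variables (P Q : Type) (openP : (P -> Prop) -> Prop) (openQ : (Q -> Prop) -> Prop).

Lemma seq_converges_fst (c : nat -> P * Q) (z : P * Q) :
  openQ (fun _ => True) -> seq_converges (prod_open openP openQ) c z ->
  seq_converges openP (fun n => fst (c n)) (fst z).
Proof.
  intros HQ Hc V HV HVz. apply (Hc (fun w => V (fst w))); [| exact HVz].
  intros w Hw. exists V, (fun _ => True). repeat split; auto.
Qed.

Lemma seq_converges_snd (c : nat -> P * Q) (z : P * Q) :
  openP (fun _ => True) -> seq_converges (prod_open openP openQ) c z ->
  seq_converges openQ (fun n => snd (c n)) (snd z).
Proof.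
  intros HP Hc V HV HVz. apply (Hc (fun w => V (snd w))); [| exact HVz].
  intros w Hw. exists (fun _ => True), V. repeat split; auto.
Qed.

Lemma in_closure_compl_of_no_box {U : P * Q -> Prop} {z : P * Q} :
  ~ (exists A B, openP A /\ openQ B /\ A (fst z) /\ B (snd z) /\
       forall a b, A a -> B b -> U (a, b)) ->
  in_closure (prod_open openP openQ) (fun w => ~ U w) z.
Proof.
  intros Hno W HW HWz.
  destruct (HW z HWz) as [A [B [HA [HB [HAz [HBz HABW]]]]]].
  apply NNPP. intros Hall. apply Hno.
  exists A, B. repeat split; auto.
  intros a b Ha Hb. apply NNPP. intros HnU.
  apply Hall. exists (a, b). split; [exact HnU | exact (HABW a b Ha Hb)].
Qed.

Lemma prod_open_of_seq_open (U : P * Q -> Prop) :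
  frechet (prod_open openP openQ) -> seq_open (prod_open openP openQ) U ->
  prod_open openP openQ U.
Proof.
  intros Hfr HU z Hz. apply NNPP. intros Hno.
  destruct (Hfr _ _ (in_closure_compl_of_no_box Hno)) as [c [HcU Hc]].
  destruct (HU c z Hz Hc) as [N HN].
  exact (HcU N (HN N (le_n N))).
Qed.

End ProductTopology.

Lemma scott_open_seq_open (P Q : Type) (leP : P -> P -> Prop) (leQ : Q -> Q -> Prop)
  (reflP : forall x, leP x x) (reflQ : forall y, leQ y y) (U : P * Q -> Prop) :
  scott_open (prod_le leP leQ) U ->
  seq_open (prod_open (scott_open leP) (scott_open leQ)) U.
Proof.
  intros HU c [a b] Hab Hc.
  pose proof (seq_converges_fst (scott_open_True leQ) Hc) as Hfst.
  pose proof (seq_converges_snd (scott_open_True leP) Hc) as Hsnd.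
  destruct (Hsnd _ (scott_open_slice_r reflP a HU) Hab) as [M HM].
  pose proof (scott_open_slice_along_seq reflP reflQ HU (seq_converges_shift M Hsnd))
    as HA.
  destruct (Hfst _ HA) as [N HN].
  { split; [exact Hab | intros m; apply HM; lia]. }
  exists (N + M). intros n Hn.
  destruct (HN n ltac:(lia)) as [_ Hnt].
  specialize (Hnt (n - M)).
  replace (M + (n - M)) with n in Hnt by lia.
  destruct (c n); exact Hnt.
Qed.

Theorem theorem3p5 (P Q : Type) (leP : P -> P -> Prop) (leQ : Q -> Q -> Prop) :
  is_poset leP -> is_poset leQ ->
  frechet (prod_open (scott_open leP) (scott_open leQ)) ->
  forall U : P * Q -> Prop,
    scott_open (prod_le leP leQ) U <-> prod_open (scott_open leP) (scott_open leQ) U.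
Proof.
  intros [reflP _] [reflQ _] Hfr U. split.
  - intros HU. apply prod_open_of_seq_open; [exact Hfr |].
    exact (scott_open_seq_open reflP reflQ HU).
  - apply scott_open_of_prod_open.
Qed.
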